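(* Let $m,n\in\mathbb{N}$ and $\epsilon>0$. Let $\Gamma\subseteq\mathbb{Z}_n$ and let $f:\mathbb{Z}_n\to\mathbb{C}$ be a $|\Gamma|$-sparse function of the form $f(x)=\sum_{\alpha\in\Gamma}\widehat f(\alpha)\chi_\alpha(x)$. Let $\ell:=\min(n,m)$ and let $g:\mathbb{Z}_m\to\mathbb{C}$ be defined by $g(x)=f(x)$ for $0\le x<\ell$ and $g(x)=0$ otherwise. Let $r=|\Gamma|\,\|f\|_2^2/(2\epsilon)$ and $\Gamma'=\bigcup_{\alpha\in\Gamma}\{\beta\in\mathbb{Z}_m:|\frac mn\alpha-\beta|_m\le r+1\}$. Then $\|g-g|_{\Gamma'}\|_2^2\le\epsilon$.
   Context: $\mathbb{Z}_n=\{0,\dots,n-1\}$ with addition mod $n$; elements are treated as these integer representatives. For $h:\mathbb{Z}_n\to\mathbb{C}$: $\langle h_1,h_2\rangle=\frac1n\sum_x h_1(x)\overline{h_2(x)}$, $\|h\|_2^2=\langle h,h\rangle$, $\chi_\alpha(x)=\exp(2\pi i\alpha x/n)$, $\widehat h(\alpha)=\langle h,\chi_\alpha\rangle$; analogously on $\mathbb{Z}_m$ with $m$ in place of $n$. For $\Gamma'\subseteq\mathbb{Z}_m$ and $h:\mathbb{Z}_m\to\mathbb{C}$, $h|_{\Gamma'}=\sum_{\beta\in\Gamma'}\widehat h(\beta)\chi_{\beta,m}$. For $k\in\mathbb{N}$, $x\in\mathbb{R}$: $|x|_k=\min\{|x-kz|:z\in\mathbb{Z}\}$. *)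

From mathcomp Require Import all_boot all_algebra complex.
From mathcomp Require Import all_classical all_reals all_analysis.
Set Implicit Arguments. Unset Strict Implicit. Unset Printing Implicit Defensive.
Import GRing.Theory Num.Theory.
Local Open Scope ring_scope.
Local Open Scope complex_scope.
Local Open Scope classical_set_scope.

(* Z_n is modelled by 'I_n = {0,..,n-1} (integer representatives);
   complex numbers are R[i] for a realType R. *)

Definition expi (R : realType) (t : R) : R[i] := Complex (cos t) (sin t).

Definition chi (R : realType) (n : nat) (alpha x : 'I_n) : R[i] :=
  expi (2 * pi * (alpha%:R * x%:R) / n%:R).

Definition inner (R : realType) (n : nat) (h1 h2 : 'I_n -> R[i]) : R[i] :=
  (n%:R)^-1 * \sum_(x < n) h1 x * (h2 x)^*.

Definition fhat (R : realType) (n : nat) (h : 'I_n -> R[i]) (alpha : 'I_n) : R[i] :=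
  inner h (chi R alpha).

Definition norm2sq (R : realType) (n : nat) (h : 'I_n -> R[i]) : R :=
  (n%:R)^-1 * \sum_(x < n) (Normc.normc (h x)) ^+ 2.

Definition restrictF (R : realType) (n : nat) (h : 'I_n -> R[i]) (G : {set 'I_n})
  : 'I_n -> R[i] :=
  fun x => \sum_(beta in G) fhat h beta * chi R beta x.

Definition distk (R : realType) (k : nat) (x : R) : R :=
  inf [set `|x - k%:R * z%:~R| | z in [set: int]].

From mathcomp Require Import all_boot all_algebra complex.
From mathcomp Require Import all_classical all_reals all_analysis.
From mathcomp Require Import order ring lra zify.
Set Implicit Arguments.
Unset Strict Implicit.
Unset Printing Implicit Defensive.
Import Order.TTheory GRing.Theory Num.Theory numFieldNormedType.Exports.
Local Open Scope ring_scope.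

(* By Parseval, the error is the energy sum_{b notin Gamma'} |ghat b|^2.  Truncating f to
   [0, l) turns ghat b into sum_a fhat a * D_a(b), where D_a(b) = (1/m) sum_{x<l} e^{i t x}
   with t = 2 pi (m a / n - b) / m is a geometric sum; hence |D_a(b)| <= 1/(m |sin(t/2)|),
   and Jordan's inequality bounds this by 1/(2 d) with d = |m a / n - b|_m.  Cauchy-Schwarz
   gives |ghat b|^2 <= ||f||^2 sum_a |D_a(b)|^2.  For b notin Gamma' we have d > r + 1, and as
   b runs over Z_m the distances are phi + j and 1 - phi + j (j = 0, 1, ...) for some phi in
   [0, 1); a telescoping bound on sum_{x > r + 1} 1/x^2 along each of these progressions gives
   sum_b |D_a(b)|^2 <= 2/(4r), so the error is at most |Gamma| ||f||^2 / (2r) = eps. *)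

Local Notation normc := Normc.normc.

Section ComplexExponential.
Variable R : realType.
Implicit Types (s t : R) (z : R[i]).

Lemma expiD s t : expi (s + t) = expi s * expi t.
Proof. by rewrite /expi cosD sinD /=; congr Complex; ring. Qed.

Lemma expi0 : expi 0 = 1 :> R[i].
Proof. by rewrite /expi cos0 sin0. Qed.

Lemma expi_conj t : (expi t)^* = expi (- t).
Proof. by rewrite /expi cosN sinN. Qed.

Lemma expiX t k : expi t ^+ k = expi (t *+ k).
Proof.
elim: k => [|k IHk]; first by rewrite expr0 mulr0n expi0.
by rewrite exprS IHk mulrS expiD.
Qed.

Lemma expi_2pi_natr (k : nat) : expi (2 * pi * k%:R) = 1 :> R[i].
Proof.
have -> : 2 * pi * k%:R = 0 + (pi *+ 2) *+ k :> R by rewrite add0r -mulr_natr; ring.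
by rewrite /expi (periodicn (@cosD2pi R)) (periodicn (@sinD2pi R)) cos0 sin0.
Qed.

Lemma normc_ge0 z : 0 <= normc z.
Proof. by case: z => a b; rewrite sqrtr_ge0. Qed.

Lemma normc_sqr z : (normc z ^+ 2)%:C%C = z * z^*.
Proof.
by case: z => a b /=; rewrite sqr_sqrtr ?addr_ge0 ?sqr_ge0 //; congr Complex; ring.
Qed.

Lemma normc_real t : normc t%:C%C = `|t|.
Proof. by rewrite /= expr0n /= addr0 sqrtr_sqr. Qed.

Lemma normc_expi t : normc (expi t) = 1.
Proof. by rewrite /= cos2Dsin2 sqrtr1. Qed.

Lemma normc_sum_le (I : finType) (P : pred I) (F : I -> R[i]) :
  normc (\sum_(i | P i) F i) <= \sum_(i | P i) normc (F i).
Proof.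
elim/big_rec2: _ => [|i y1 y2 _ IH]; first by rewrite Normc.normc0.
by apply: le_trans (le_normcD _ _) _; rewrite lerD2l.
Qed.

(* |e^{it} - 1|^2 = (1 - cos t)^2 + sin^2 t = 2 - 2 cos t = 4 sin^2 (t/2) *)
Lemma normc_expi_sub1 t : normc (expi t - 1) = 2 * `|sin (t / 2)|.
Proof.
have cos_half : cos t = 1 - 2 * sin (t / 2) ^+ 2.
  rewrite {1}(splitr t) cosD -!expr2 cos2sin2; ring.
have -> : 2 * `|sin (t / 2)| = `|2 * sin (t / 2)| by rewrite normrM ger0_norm.
rewrite -sqrtr_sqr /= exprMn.
by rewrite oppr0 addr0 sin2cos2 cos_half; congr Num.sqrt; ring.
Qed.

Lemma expi_neq1 t : sin (t / 2) != 0 -> expi t != 1.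
Proof.
move=> s0; apply: contra s0 => /eqP t1.
have := normc_expi_sub1 t; rewrite t1 subrr Normc.normc0 => /esym/eqP.
by rewrite mulf_eq0 normr_eq0 pnatr_eq0.
Qed.

Lemma normc_geometric_le t L : sin (t / 2) != 0 ->
  normc (\sum_(x < L) expi (t *+ x)) <= `|sin (t / 2)|^-1.
Proof.
move=> s0; have s_gt0 : 0 < `|sin (t / 2)| by rewrite normr_gt0.
have d_gt0 : 0 < normc (expi t - 1) by rewrite normc_expi_sub1 mulr_gt0.
under eq_bigr do rewrite -expiX.
rewrite -(ler_pM2l d_gt0) -Normc.normcM -subrX1 normc_expi_sub1.
rewrite -mulrA mulfV ?mulr1 ?lt0r_neq0 //.
apply: le_trans (le_normcD _ _) _.
by rewrite normcN expiX normc_expi Normc.normc1.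
Qed.

End ComplexExponential.

Lemma sin_pi_neq0 (R : realType) (q : R) : 0 < `|q| < 1 -> sin (pi * q) != 0.
Proof.
have sin_gt0 (x : R) : 0 < x < 1 -> 0 < sin (pi * x).
  by case/andP=> x0 x1; apply: sin_gt0_pi; rewrite mulr_gt0 ?pi_gt0 //= gtr_pMr ?pi_gt0.
case: (ltrP 0 q) => [q_gt0 | q_le0] q_bd.
  by rewrite lt0r_neq0 // sin_gt0 // -(gtr0_norm q_gt0).
by rewrite -(opprK q) mulrN sinN oppr_eq0 lt0r_neq0 // sin_gt0 // -(ler0_norm q_le0).
Qed.

Lemma norm2sq_ge0 (R : realType) (k : nat) (h : 'I_k -> R[i]) : 0 <= norm2sq h.
Proof. by rewrite mulr_ge0 ?invr_ge0 ?sumr_ge0 // => x _; rewrite sqr_ge0. Qed.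

Section FourierZn.
Variables (R : realType) (k : nat).
Hypothesis k_gt0 : (0 < k)%N.

Let kR_neq0 : (k%:R : R) != 0. Proof. by rewrite pnatr_eq0 -lt0n. Qed.
Let kC_neq0 : (k%:R : R[i]) != 0. Proof. by rewrite pnatr_eq0 -lt0n. Qed.

Lemma chi_sym (a x : 'I_k) : chi R a x = chi R x a.
Proof. by rewrite /chi [(a : nat)%:R * _]mulrC. Qed.

Lemma chi_orthogonal (a b : 'I_k) :
  \sum_(x < k) chi R a x * (chi R b x)^* = (a == b)%:R * k%:R.
Proof.
set th : R := 2 * pi * ((a : nat)%:R - (b : nat)%:R) / k%:R.
have chi_expi x : chi R a x * (chi R b x)^* = expi th ^+ x.
  by rewrite /chi expi_conj -expiD expiX -mulr_natr /th; congr expi; field.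
under eq_bigr do rewrite chi_expi.
have [eq_ab|neq_ab] := eqVneq a b.
  rewrite /th eq_ab subrr mulr0 mul0r expi0.
  by under eq_bigr do rewrite expr1n; rewrite sumr_const card_ord mul1r.
have th_k : expi th ^+ k = 1.
  rewrite expiX -mulr_natr.
  have -> : th * k%:R = 2 * pi * (a : nat)%:R - 2 * pi * (b : nat)%:R by rewrite /th; field.
  by rewrite expiD -expi_conj !expi_2pi_natr conjC1 mulr1.
have th_neq1 : expi th != 1.
  apply: expi_neq1.
  have -> : th / 2 = pi * (((a : nat)%:R - (b : nat)%:R) / k%:R) by rewrite /th; field.
  apply: sin_pi_neq0; rewrite normrM normfV normr_nat; apply/andP; split.
    by rewrite divr_gt0 ?ltr0n // normr_gt0 subr_eq0 eqr_nat.
  have [a_lt b_lt] : ((a : nat)%:R : R) < k%:R /\ ((b : nat)%:R : R) < k%:R.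
    by rewrite !ltr_nat.
  have [a_ge0 b_ge0] : (0 : R) <= (a : nat)%:R /\ (0 : R) <= (b : nat)%:R by [].
  by rewrite ltr_pdivrMr ?ltr0n // mul1r ltr_norml; apply/andP; split; lra.
have := subrX1 (expi th) k; rewrite th_k subrr => /esym/eqP.
by rewrite mulf_eq0 subr_eq0 (negbTE th_neq1) mul0r => /eqP.
Qed.

Lemma fourier_inversion (h : 'I_k -> R[i]) (x : 'I_k) :
  h x = \sum_(b < k) fhat h b * chi R b x.
Proof.
transitivity (\sum_(y < k) (k%:R)^-1 * h y * \sum_(b < k) chi R x b * (chi R y b)^*).
  under eq_bigr do rewrite chi_orthogonal.
  rewrite (bigD1 x) //= eqxx mul1r mulrAC mulVf ?mul1r // big1 ?addr0 //.
  by move=> y; rewrite eq_sym => /negbTE ->; rewrite !mul0r mulr0.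
under eq_bigr do rewrite mulr_sumr.
rewrite exchange_big /=; apply: eq_bigr => b _.
rewrite /fhat /inner mulr_sumr mulr_suml; apply: eq_bigr => y _.
by rewrite [chi R x b]chi_sym [chi R y b]chi_sym; ring.
Qed.

Lemma parseval (S : {set 'I_k}) (c : 'I_k -> R[i]) :
  norm2sq (fun x => \sum_(b in S) c b * chi R b x) = \sum_(b in S) normc (c b) ^+ 2.
Proof.
apply: (@complexI R).
rewrite /norm2sq rmorphM fmorphV rmorph_nat !rmorph_sum /=.
under eq_bigr do rewrite normc_sqr rmorph_sum mulr_suml.
under [RHS]eq_bigr do rewrite normc_sqr.
transitivity ((k%:R)^-1 * \sum_(b in S) \sum_(b' in S)
   c b * (c b')^* * \sum_(x < k) chi R b x * (chi R b' x)^*).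
  congr (_ * _); rewrite exchange_big /=; apply: eq_bigr => b _.
  under eq_bigr do rewrite mulr_sumr.
  rewrite exchange_big /=; apply: eq_bigr => b' _.
  by rewrite mulr_sumr; apply: eq_bigr => x _; rewrite rmorphM /=; ring.
rewrite mulr_sumr; apply: eq_bigr => b bS.
under eq_bigr do rewrite chi_orthogonal.
rewrite (bigD1 b) //= big1 ?addr0 => [|b' /andP[_ /negbTE]].
  by rewrite eqxx mul1r mulrCA mulVf ?mulr1.
by rewrite eq_sym => ->; rewrite mul0r mulr0.
Qed.

Lemma norm2sq_sparse (S : {set 'I_k}) (h : 'I_k -> R[i]) :
  (forall x, h x = \sum_(a in S) fhat h a * chi R a x) ->
  norm2sq h = \sum_(a in S) normc (fhat h a) ^+ 2.
Proof. by move=> /funext {1}->; rewrite parseval. Qed.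

Lemma norm2sq_sub_restrict (h : 'I_k -> R[i]) (S : {set 'I_k}) :
  norm2sq (fun x => h x - restrictF h S x) = \sum_(b in ~: S) normc (fhat h b) ^+ 2.
Proof.
rewrite -parseval; congr norm2sq; apply: funext => x.
rewrite {1}(fourier_inversion h x) /restrictF (bigID [in S]) /= addrC addrK.
by apply: eq_bigl => b; rewrite !inE.
Qed.

End FourierZn.

Section CauchySchwarz.
Variables (I : finType) (P : pred I).

(* Lagrange: with A = sum a^2, B = sum a b, C = sum b^2,
   0 <= sum (A b_i - B a_i)^2 = A (A C - B^2). *)
Lemma cauchy_schwarz (R : realDomainType) (a b : I -> R) :
  (\sum_(i | P i) a i * b i) ^+ 2 <=
  (\sum_(i | P i) a i ^+ 2) * (\sum_(i | P i) b i ^+ 2).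
Proof.
set A := \sum_(i | P i) a i ^+ 2; set B := \sum_(i | P i) a i * b i.
set C := \sum_(i | P i) b i ^+ 2.
have A_ge0 : 0 <= A by rewrite sumr_ge0 // => i _; rewrite sqr_ge0.
have lagrange : \sum_(i | P i) (A * b i - B * a i) ^+ 2 = A * (A * C - B ^+ 2).
  rewrite (eq_bigr (fun i => A ^+ 2 * b i ^+ 2 + - (2 * A * B) * (a i * b i)
                            + B ^+ 2 * a i ^+ 2)) => [|i _]; last by ring.
  by rewrite !big_split /= -!mulr_sumr -/A -/B -/C; ring.
have : 0 <= A * (A * C - B ^+ 2) by rewrite -lagrange sumr_ge0 // => i _; rewrite sqr_ge0.
have [A_gt0 | A_le0] := ltrP 0 A; first by rewrite pmulr_rge0 // subr_ge0.
have A0 : A = 0 by apply/eqP; rewrite eq_le A_le0 A_ge0.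
have a0 i : P i -> a i = 0.
  move=> Pi; apply/eqP; rewrite -sqrf_eq0; apply/eqP; move: i Pi; apply/psumr_eq0P => //.
  by move=> i _; rewrite sqr_ge0.
by rewrite /B big1 => [|i /a0 ->]; rewrite ?A0 ?mul0r // expr0n.
Qed.

Lemma normc_sum_mul_sqr_le (R : realType) (a c : I -> R[i]) :
  normc (\sum_(i | P i) a i * c i) ^+ 2 <=
  (\sum_(i | P i) normc (a i) ^+ 2) * (\sum_(i | P i) normc (c i) ^+ 2).
Proof.
apply: le_trans (cauchy_schwarz (fun i => normc (a i)) (fun i => normc (c i))).
have triangle : normc (\sum_(i | P i) a i * c i) <= \sum_(i | P i) normc (a i) * normc (c i).
  by apply: le_trans (normc_sum_le _ _) _; under eq_bigr do rewrite Normc.normcM.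
by rewrite !expr2 ler_pM ?normc_ge0.
Qed.

End CauchySchwarz.

Lemma ler_sum_subpred (R : numDomainType) (I : finType) (P Q : pred I) (F : I -> R) :
  (forall i, P i -> Q i) -> (forall i, Q i -> 0 <= F i) ->
  \sum_(i | P i) F i <= \sum_(i | Q i) F i.
Proof.
move=> PQ F_ge0; rewrite [leLHS]big_mkcond [leRHS]big_mkcond /=; apply: ler_sum => i _.
by case: ifPn => [/PQ -> // | _]; case: ifP => // /F_ge0.
Qed.

Section Jordan.
Variable R : realType.

Lemma sin_mvt (a b : R) : a < b ->
  exists2 c, c \in `]a, b[ & sin b - sin a = cos c * (b - a).
Proof.
move=> ab; apply: MVT => //.
by apply: continuous_subspaceT; exact: continuous_sin.
Qed.

(* sin t = t cos c1 and 1 - sin t = (pi/2 - t) cos c2 with c1 < t < c2,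
   and cos c1 >= cos c2 says that sin lies above its chord on [0, pi/2]. *)
Lemma jordan_sin (x : R) : 0 <= x <= 1 / 2 -> 2 * x <= sin (pi * x).
Proof.
case/andP=> x_ge0 x_le; have pi_gt0 := @pi_gt0 R.
have [->|x_neq0] := eqVneq x 0; first by rewrite !mulr0 sin0.
have [->|x_neq] := eqVneq x (1 / 2); first by rewrite mul1r sin_pihalf mulfV.
have x_gt0 : 0 < x by rewrite lt0r x_neq0.
have x_lt : x < 1 / 2 by rewrite lt_neqAle x_neq.
set t := pi * x; set p : R := pi / 2.
have t_gt0 : 0 < t by rewrite mulr_gt0.
have t_lt : t < p by rewrite /t /p (_ : pi / 2 = pi * (1 / 2)) ?ltr_pM2l // mul1r.
have [c1 + e1] := sin_mvt t_gt0; have [c2 + e2] := sin_mvt t_lt.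
rewrite !in_itv /= => /andP[c2_gt c2_lt] /andP[c1_gt0 c1_lt].
move: e1 e2; rewrite sin0 !subr0 sin_pihalf => e1 e2.
have p_lt_pi : p < pi by rewrite /p; lra.
have cos_le : cos c2 <= cos c1.
  by rewrite ltW // ltr_cos ?in_itv /=; [lra | apply/andP; split; lra ..].
have : 0 <= sin t * p - t.
  have -> : sin t * p - t = t * (p - t) * (cos c1 - cos c2).
    transitivity (sin t * (p - t) - t * (1 - sin t)); first by ring.
    by rewrite e2 e1; ring.
  by rewrite !mulr_ge0 ?subr_ge0 // ltW.
rewrite subr_ge0 => t_le.
rewrite -(ler_pM2r (_ : 0 < p)) ?divr_gt0 //; apply: le_trans t_le.
by have -> : 2 * x * p = t by rewrite /t /p; field.
Qed.

Lemma sin_pi_ge (x D : R) : 0 <= D -> D <= x -> D <= 1 - x -> 2 * D <= sin (pi * x).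
Proof.
move=> D_ge0 Dx Dx'.
have [x_le|x_gt] := lerP x (1 / 2).
  by apply: le_trans (jordan_sin _); rewrite ?ler_pM2l //; apply/andP; split; lra.
rewrite -[sin _]opprK -sinN -sinDpi (_ : - (pi * x) + pi = pi * (1 - x)); last by ring.
by apply: le_trans (jordan_sin _); rewrite ?ler_pM2l //; apply/andP; split; lra.
Qed.

End Jordan.

Definition inv_sqr_beyond (R : realType) (r x : R) : R :=
  if r + 1 < x then (x ^+ 2)^-1 else 0.

Section InverseSquareTail.
Variables (R : realType) (r : R).

Lemma inv_sqr_beyond_ge0 (x : R) : 0 <= inv_sqr_beyond r x.
Proof. by rewrite /inv_sqr_beyond; case: ifP => // _; rewrite invr_ge0 sqr_ge0. Qed.

(* beyond r + 1, x^-2 <= 1 / (x (x - 1)) = (x - 1)^-1 - x^-1; capping at r keeps the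
   right-hand side nonnegative below r + 1 *)
Lemma inv_sqr_beyond_le_telescope (x : R) : 0 < r ->
  inv_sqr_beyond r x <= (Num.max r (x - 1))^-1 - (Num.max r x)^-1.
Proof.
move=> r_gt0; rewrite /inv_sqr_beyond; case: ltrP => [x_gt|_].
  have x_gt0 : 0 < x by lra.
  have x1_gt0 : 0 < x - 1 by lra.
  rewrite !max_r; [|lra..].
  have -> : (x - 1)^-1 - x^-1 = (x * (x - 1))^-1 by field; rewrite !lt0r_neq0.
  by rewrite lef_pV2 ?posrE ?exprn_gt0 ?mulr_gt0 // expr2 ler_pM2l // gerBl.
by rewrite subr_ge0 lef_pV2 ?posrE ?lt_max ?r_gt0 // le_max2 // gerBl.
Qed.

Lemma sum_inv_sqr_beyond_le (psi : R) (M : nat) : 0 < r -> psi <= 1 ->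
  \sum_(j < M) inv_sqr_beyond r (psi + j%:R) <= r^-1.
Proof.
move=> r_gt0 psi_le1; pose G (j : nat) := - (Num.max r (psi + j%:R - 1))^-1.
have telescope j : inv_sqr_beyond r (psi + j%:R) <= G j.+1 - G j.
  rewrite /G opprK [- _ + _]addrC -natr1 (_ : psi + (j%:R + 1) - 1 = psi + j%:R); last by ring.
  exact: inv_sqr_beyond_le_telescope.
apply: le_trans (ler_sum _ (fun (j : 'I_M) _ => telescope j)) _.
rewrite -(big_mkord xpredT (fun j => G j.+1 - G j)) telescope_sumr // /G.
rewrite addr0 opprK (@max_l _ _ r (psi - 1)); last lra.
by rewrite gerDr oppr_le0 invr_ge0 le_max ltW.
Qed.

End InverseSquareTail.

Lemma distk_le (R : realType) (k : nat) (y : R) (z : int) :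
  distk k y <= `|y - k%:R * z%:~R|.
Proof. by apply: ge_inf; [exists 0 => _ [w _ <-] | exists z]. Qed.

Lemma distk_le_min (R : realType) (k : nat) (u y : R) : 0 <= u <= k%:R ->
  y = u \/ y = u - k%:R -> distk k y <= Num.min u (k%:R - u).
Proof.
move=> /andP[u_ge0 u_le]; rewrite le_min; case=> ->; apply/andP; split.
- by apply: le_trans (distk_le _ _ 0) _; rewrite mulr0 subr0 ger0_norm.
- by apply: le_trans (distk_le _ _ 1) _; rewrite mulr1 distrC ger0_norm ?subr_ge0.
- by apply: le_trans (distk_le _ _ (-1)) _; rewrite rmorphN1 mulrN1 opprK subrK ger0_norm.
- by apply: le_trans (distk_le _ _ 0) _; rewrite mulr0 subr0 distrC ger0_norm ?subr_ge0.
Qed.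

Definition dirichlet (R : realType) (m l : nat) (t : R) : R[i] :=
  (m%:R)^-1 * \sum_(x < l) expi (t *+ x).

Section DirichletKernel.
Variables (R : realType) (m l : nat).
Hypothesis m_gt0 : (0 < m)%N.

Lemma dirichlet_sub2pi (t : R) : dirichlet m l (t - 2 * pi) = dirichlet m l t.
Proof.
rewrite /dirichlet; congr (_ * _); apply: eq_bigr => x _.
by rewrite mulrnBl expiD -expi_conj -[(2 * pi) *+ x]mulr_natr expi_2pi_natr conjC1 mulr1.
Qed.

Lemma normc_dirichlet_le (u D : R) : 0 < D -> D <= u -> D <= m%:R - u ->
  normc (dirichlet m l (2 * pi * u / m%:R)) <= (2 * D)^-1.
Proof.
move=> D_gt0 Du Dmu; have m_pos : (0 : R) < m%:R by rewrite ltr0n.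
have sin_ge : 2 * (D / m%:R) <= sin (2 * pi * u / m%:R / 2).
  rewrite (_ : _ / 2 = pi * (u / m%:R)); last by field; rewrite lt0r_neq0.
  apply: sin_pi_ge; first by rewrite divr_ge0 // ltW.
    by rewrite ler_pM2r ?invr_gt0.
  rewrite (_ : 1 - u / m%:R = (m%:R - u) / m%:R) ?ler_pM2r ?invr_gt0 //.
  by field; rewrite lt0r_neq0.
have sin_gt0 : 0 < sin (2 * pi * u / m%:R / 2).
  by apply: lt_le_trans sin_ge; rewrite mulr_gt0 ?divr_gt0.
rewrite /dirichlet Normc.normcM Normc.normcV normcMn Normc.normc1.
apply: le_trans (ler_wpM2l _ (normc_geometric_le _ (lt0r_neq0 sin_gt0))) _.
  by rewrite invr_ge0 ler0n.
rewrite gtr0_norm // -invfM lef_pV2 ?posrE ?mulr_gt0 //.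
by rewrite [m%:R * _]mulrC -ler_pdivrMr // -[2 * D / _]mulrA.
Qed.

Lemma normc_dirichlet_sqr_le (r u : R) : 0 <= r -> r + 1 < Num.min u (m%:R - u) ->
  normc (dirichlet m l (2 * pi * u / m%:R)) ^+ 2
    <= (inv_sqr_beyond r u + inv_sqr_beyond r (m%:R - u)) / 4.
Proof.
move=> r_ge0; set D := Num.min _ _ => D_gt.
have D_gt0 : 0 < D by lra.
have D_le_u : D <= u by rewrite ge_min lexx.
have D_le_mu : D <= m%:R - u by rewrite ge_min lexx orbT.
have bound := normc_dirichlet_le D_gt0 D_le_u D_le_mu.
apply: le_trans (_ : ((2 * D)^-1) ^+ 2 <= _).
  by rewrite !expr2 ler_pM ?normc_ge0.
have -> : ((2 * D)^-1) ^+ 2 = inv_sqr_beyond r D / 4.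
  by rewrite /inv_sqr_beyond D_gt; field; rewrite lt0r_neq0.
rewrite ler_pM2r ?invr_gt0 //.
have [D_u|D_mu] : D = u \/ D = m%:R - u.
  by rewrite /D; case: leP; [left | right].
- by rewrite -D_u lerDl inv_sqr_beyond_ge0.
- by rewrite -D_mu lerDr inv_sqr_beyond_ge0.
Qed.

Lemma normc_dirichlet_sqr_le_distk (r u y : R) : 0 <= r -> 0 <= u <= m%:R ->
  y = u \/ y = u - m%:R -> r + 1 < distk m y ->
  normc (dirichlet m l (2 * pi * y / m%:R)) ^+ 2
    <= (inv_sqr_beyond r u + inv_sqr_beyond r (m%:R - u)) / 4.
Proof.
move=> r_ge0 u_itv y_cases far.
have kernel_eq : dirichlet m l (2 * pi * y / m%:R) = dirichlet m l (2 * pi * u / m%:R).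
  case: y_cases => -> //; rewrite -[RHS]dirichlet_sub2pi; congr dirichlet.
  by field; rewrite pnatr_eq0 -lt0n.
rewrite kernel_eq; apply: normc_dirichlet_sqr_le r_ge0 (lt_le_trans far _).
exact: distk_le_min.
Qed.

End DirichletKernel.

Definition cyclic_sub (m c0 b : nat) : nat :=
  if (b <= c0)%N then (c0 - b)%N else (c0 + m - b)%N.

Section CyclicSub.
Variables (m c0 : nat).
Hypothesis c0_lt : (c0 < m)%N.

Lemma cyclic_sub_lt b : (b < m)%N -> (cyclic_sub m c0 b < m)%N.
Proof. by rewrite /cyclic_sub; case: ifP; lia. Qed.

Definition rot (b : 'I_m) : 'I_m := Ordinal (cyclic_sub_lt (ltn_ord b)).

Lemma rot_inj : injective rot.
Proof.
move=> b1 b2 /(congr1 val); rewrite /= /cyclic_sub => eq_rot; apply: val_inj => /=.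
by have := ltn_ord b1; have := ltn_ord b2; move: eq_rot; do 2!case: ifP; lia.
Qed.

Lemma natrB_rot (R : pzRingType) (b : 'I_m) :
  c0%:R - b%:R = (rot b)%:R :> R \/ c0%:R - b%:R = (rot b)%:R - m%:R :> R.
Proof.
rewrite /= /cyclic_sub; case: ifP => b_le; [left | right]; first by rewrite natrB.
by rewrite natrB ?natrD; [rewrite addrAC addrK | have := ltn_ord b; lia].
Qed.

End CyclicSub.

Lemma dirichlet_tail_le (R : realType) (m l : nat) (c r : R) :
  0 <= c -> c < m%:R -> 0 < r ->
  \sum_(b < m | r + 1 < distk m (c - b%:R))
     normc (dirichlet m l (2 * pi * (c - b%:R) / m%:R)) ^+ 2 <= (2 * r)^-1.
Proof.
move=> c_ge0 c_lt r_gt0; set c0 := Num.truncn c.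
have c0_lt : (c0 < m)%N by rewrite truncn_lt_nat.
have m_gt0 : (0 < m)%N by apply: leq_ltn_trans c0_lt.
have /andP[c0_le c_lt_c0S] := truncn_itv c_ge0; rewrite -/c0 -natr1 in c0_le c_lt_c0S.
pose u (b : 'I_m) := c - c0%:R + (rot c0_lt b)%:R.
have u_itv b : 0 <= u b <= m%:R.
  have : ((rot c0_lt b).+1%:R : R) <= m%:R by rewrite ler_nat.
  have := ler0n R (rot c0_lt b).
  by rewrite -natr1 /u => ? ?; apply/andP; split; lra.
apply: le_trans (_ : _ <= \sum_(b < m)
    (inv_sqr_beyond r (u b) + inv_sqr_beyond r (m%:R - u b)) / 4) _.
  rewrite big_mkcond /=; apply: ler_sum => b _; case: ifP => [far|_]; last first.
    by rewrite divr_ge0 ?addr_ge0 ?inv_sqr_beyond_ge0.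
  apply: (normc_dirichlet_sqr_le_distk l m_gt0 (ltW r_gt0) (u_itv b) _ far).
  by rewrite /u; case: (natrB_rot c0_lt R b) => e; [left | right]; lra.
rewrite -mulr_suml big_split /=.
have sum_u : \sum_(b < m) inv_sqr_beyond r (u b) <= r^-1.
  have := sum_inv_sqr_beyond_le m r_gt0 (_ : c - c0%:R <= 1).
  by rewrite (reindex_inj (@rot_inj _ _ c0_lt)); apply; lra.
have sum_mu : \sum_(b < m) inv_sqr_beyond r (m%:R - u b) <= r^-1.
  have -> : \sum_(b < m) inv_sqr_beyond r (m%:R - u b) = \sum_(b < m)
      inv_sqr_beyond r (1 - (c - c0%:R) + (rev_ord (rot c0_lt b) : nat)%:R).
    apply: eq_bigr => b _; rewrite /u /= natrB ?cyclic_sub_lt // -addn1 natrD.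
    by congr inv_sqr_beyond; ring.
  have := sum_inv_sqr_beyond_le m r_gt0 (_ : 1 - (c - c0%:R) <= 1).
  by rewrite (reindex_inj (inj_comp (@rev_ord_inj m) (@rot_inj _ _ c0_lt))); apply; lra.
apply: le_trans (ler_wpM2r _ (lerD sum_u sum_mu)) _; first by rewrite invr_ge0.
by rewrite le_eqVlt; apply/orP; left; apply/eqP; field; rewrite lt0r_neq0.
Qed.

Section Truncation.
Variables (R : realType) (m n : nat) (Gamma : {set 'I_n}).
Variables (f : 'I_n -> R[i]) (g : 'I_m -> R[i]).
Hypotheses (n_gt0 : (0 < n)%N) (m_gt0 : (0 < m)%N).
Hypothesis f_sparse : forall x, f x = \sum_(a in Gamma) fhat f a * chi R a x.
Hypothesis g_f : forall (x : 'I_m) (y : 'I_n),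
  (x : nat) = (y : nat) -> (x < minn n m)%N -> g x = f y.
Hypothesis g_0 : forall x : 'I_m, (minn n m <= x)%N -> g x = 0.

Lemma fhat_truncation (b : 'I_m) :
  fhat g b = \sum_(a in Gamma) fhat f a *
    dirichlet m (minn n m) (2 * pi * (m%:R / n%:R * (a : nat)%:R - (b : nat)%:R) / m%:R).
Proof.
have nR_neq0 : (n%:R : R) != 0 by rewrite pnatr_eq0 -lt0n.
have mR_neq0 : (m%:R : R) != 0 by rewrite pnatr_eq0 -lt0n.
pose th (a : 'I_n) : R := 2 * pi * (m%:R / n%:R * (a : nat)%:R - (b : nat)%:R) / m%:R.
pose P (x : nat) := \sum_(a in Gamma) fhat f a * expi (th a *+ x).
have gchi x : g x * (chi R b x)^* = if ((x : nat) < minn n m)%N then P x else 0.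
  case: ifPn => [x_lt | ]; last by rewrite -leqNgt => /g_0 ->; rewrite mul0r.
  have x_lt_n : ((x : nat) < n)%N := leq_trans x_lt (geq_minl n m).
  rewrite (g_f (y := Ordinal x_lt_n)) // f_sparse mulr_suml; apply: eq_bigr => a _.
  rewrite -mulrA /chi expi_conj -expiD; congr (_ * expi _).
  by rewrite -mulr_natr /th /=; field; rewrite nR_neq0 mR_neq0.
rewrite /fhat /inner; under eq_bigr do rewrite gchi.
rewrite -big_mkcond -big_ord_widen ?geq_minr //= /P exchange_big mulr_sumr /=.
by apply: eq_bigr => a _; rewrite /dirichlet -mulr_sumr /fhat /inner; ring.
Qed.

End Truncation.

Theorem proposition4p2 (R : realType) (m n : nat) (eps : R)
  (Gamma : {set 'I_n}) (f : 'I_n -> R[i]) :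
  (0 < n)%N -> (0 < m)%N -> 0 < eps ->
  (forall x : 'I_n, f x = \sum_(alpha in Gamma) fhat f alpha * chi R alpha x) ->
  let l := minn n m in
  forall g : 'I_m -> R[i],
  (forall (x : 'I_m) (y : 'I_n), (x : nat) = (y : nat) -> (x < l)%N -> g x = f y) ->
  (forall x : 'I_m, (l <= x)%N -> g x = 0) ->
  let r : R := #|Gamma|%:R * norm2sq f / (2 * eps) in
  let Gamma' : {set 'I_m} :=
    [set beta : 'I_m | [exists alpha in Gamma,
       distk m (m%:R / n%:R * (alpha : nat)%:R - (beta : nat)%:R) <= r + 1]] in
  norm2sq (fun x => g x - restrictF g Gamma' x) <= eps.
Proof.
move=> n_gt0 m_gt0 eps_gt0 f_sparse l g g_f g_0; cbv zeta.
set r : R := #|Gamma|%:R * _ / _; set Gamma' := [set beta : 'I_m | _].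
pose K (a : 'I_n) (b : 'I_m) : R := normc (dirichlet m l
  (2 * pi * (m%:R / n%:R * (a : nat)%:R - (b : nat)%:R) / m%:R)) ^+ 2.
have f_parseval := norm2sq_sparse n_gt0 f_sparse.
have cs b : normc (fhat g b) ^+ 2 <= norm2sq f * \sum_(a in Gamma) K a b.
  by rewrite (fhat_truncation n_gt0 m_gt0 f_sparse g_f g_0) f_parseval normc_sum_mul_sqr_le.
rewrite norm2sq_sub_restrict //; apply: le_trans (ler_sum _ (fun b _ => cs b)) _.
rewrite -mulr_sumr exchange_big /=.
have [f0|f_neq0] := eqVneq (norm2sq f) 0; first by rewrite f0 mul0r ltW.
have f_gt0 : 0 < norm2sq f by rewrite lt0r f_neq0 norm2sq_ge0.
have Gamma_gt0 : (0 < #|Gamma|)%N.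
  by rewrite card_gt0; apply: contra f_neq0 => /eqP G0; rewrite f_parseval G0 big_set0.
have r_gt0 : 0 < r by apply: divr_gt0; apply: mulr_gt0; rewrite ?ltr0n.
have tail a : a \in Gamma -> \sum_(b in ~: Gamma') K a b <= (2 * r)^-1.
  move=> aG; have a_lt : ((a : nat)%:R : R) < n%:R by rewrite ltr_nat.
  have c_lt : (m%:R : R) / n%:R * (a : nat)%:R < m%:R.
    by rewrite mulrAC ltr_pdivrMr ?ltr0n // ltr_pM2l ?ltr0n.
  have c_ge0 : (0 : R) <= m%:R / n%:R * (a : nat)%:R by rewrite mulr_ge0 ?divr_ge0.
  apply: le_trans (dirichlet_tail_le l c_ge0 c_lt r_gt0).
  apply: ler_sum_subpred => [b|b _]; last exact: sqr_ge0.
  by rewrite !inE negb_exists => /forallP /(_ a); rewrite aG -ltNge.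
apply: le_trans (ler_wpM2l (norm2sq_ge0 f) (ler_sum _ tail)) _.
rewrite sumr_const -mulr_natr /r le_eqVlt; apply/orP; left; apply/eqP; field.
by rewrite f_neq0 !lt0r_neq0 ?ltr0n.
Qed.
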